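(* For every protocol $\Pi$, there exists $(\mathsf C,j)\in\{\mathsf A,\mathsf B\}\times\mathbb N$ such that $\mathbb E_{\ell\leftarrow L_{\Pi_{(\mathsf C,j)}}}[M^{\mathsf C}_{\Pi_{(\mathsf C,j)}}(\ell)]=1$.
   Context: Protocols are $m$-round single-bit-message protocols $(\mathsf A,\mathsf B)$ identified with the complete binary tree of height $m$, with control scheme, edge probabilities $e_\Pi(u,ub)$, output $\chi_\Pi:\text{leaves}\to\{0,1\}$, visit probabilities $v_\Pi(u)$, leaf distribution $L_\Pi$; $\Pi_u$ is the subprotocol under $u$ (or $\perp$ if $v_\Pi(u)=0$); expectations over $L_\perp$ are $0$; $\mathbb E_{L_{\Pi_u}}[M]$ is the expectation of $M$ restricted to leaves under $u$. $\mathsf A$-dominated measure $M^{\mathsf A}_\Pi$: for a 0-round protocol with leaf $\ell$, $M^{\mathsf A}_\Pi(\ell)=\chi_\Pi(\ell)$; otherwise for a leaf with first bit $b$, with $\mu_c=\mathbb E_{L_{\Pi_c}}[M^{\mathsf A}_{\Pi_c}]$: value $0$ if $e_\Pi(\lambda,b)=0$; $M^{\mathsf A}_{\Pi_b}(\ell)$ if $e_\Pi(\lambda,b)=1$, or if $e_\Pi(\lambda,b)\in(0,1)$ and ($\mathsf A$ controls the root or $\mu_b\le\mu_{1-b}$); $\frac{\mu_{1-b}}{\mu_b}M^{\mathsf A}_{\Pi_b}(\ell)$ otherwise. $M^{\mathsf B}_\Pi$ is defined identically with $\mathsf A,\mathsf B$ exchanged and base case $1-\chi_\Pi(\ell)$;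 dominated measures of $\perp$ are zero. Conditional protocol: for $\mathbb E_{L_\Pi}[M]<1$, $\Pi|_M$ keeps control and output and has $e_{\Pi|_M}(u,ub)=0$ if $\mathbb E_{L_{\Pi_u}}[M]=1$, else $e_\Pi(u,ub)\frac{1-\mathbb E_{L_{\Pi_{ub}}}[M]}{1-\mathbb E_{L_{\Pi_u}}[M]}$; $\Pi|_M=\perp$ if $\mathbb E_{L_\Pi}[M]=1$ or $\Pi=\perp$. Sequence: $\Pi_{(\mathsf A,0)}=\Pi$, $\Pi_{(\mathsf B,j)}=\Pi_{(\mathsf A,j)}|_{M^{\mathsf A}_{\Pi_{(\mathsf A,j)}}}$, $\Pi_{(\mathsf A,j+1)}=\Pi_{(\mathsf B,j)}|_{M^{\mathsf B}_{\Pi_{(\mathsf B,j)}}}$. *)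

From HB Require Import structures.
From mathcomp Require Import all_boot all_order all_algebra.
From mathcomp Require Import reals.
Set Implicit Arguments. Unset Strict Implicit. Unset Printing Implicit Defensive.
Import Order.TTheory GRing.Theory Num.Theory.
Local Open Scope ring_scope.

(* An m-round single-bit-message protocol, identified with the complete binary
   tree of height m.  Nodes are bit strings u : seq bool with size u <= m
   (the root is [::], the children of u are rcons u false / rcons u true),
   leaves are the strings of size exactly m.
   - ctrlA u = true  iff party A controls node u (otherwise B does);
   - edge u b        = e_Pi(u, ub);
   - out l           = chi_Pi(l) for leaves l.
   Values at non-nodes are irrelevant. *)
Record protocol (R : realType) := Protocol {
  height : nat;
  ctrlA : seq bool -> bool;
  edge : seq bool -> bool -> R;
  out : seq bool -> bool }.

Section Protocols.
Variable R : realType.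

Definition valid (P : protocol R) : Prop :=
  forall u : seq bool, (size u < height P)%N ->
    (forall b, 0 <= edge P u b <= 1) /\ edge P u false + edge P u true = 1.

Fixpoint all_strings (n : nat) : seq (seq bool) :=
  match n with
  | 0 => [:: [::]]
  | n'.+1 => [seq b :: s | b <- [:: false; true], s <- all_strings n']
  end.

Definition visit (P : protocol R) (u : seq bool) : R :=
  \prod_(i < size u) edge P (take i u) (nth false u i).

Definition expect (P : protocol R) (M : seq bool -> R) : R :=
  \sum_(l <- all_strings (height P)) visit P l * M l.

(* Expectations over L_bot are 0; None stands for bot. *)
Definition expect_opt (oP : option (protocol R)) (M : seq bool -> R) : R :=
  match oP with None => 0 | Some P => expect P M end.

Definition shift (P : protocol R) (u : seq bool) : protocol R :=
  Protocol (height P - size u) (fun v => ctrlA P (u ++ v))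
    (fun v => edge P (u ++ v)) (fun v => out P (u ++ v)).

Definition subp (P : protocol R) (u : seq bool) : option (protocol R) :=
  if visit P u == 0 then None else Some (shift P u).

Definition expU (P : protocol R) (M : seq bool -> R) (u : seq bool) : R :=
  expect_opt (subp P u) (fun l => M (u ++ l)).

(* Dominated measures.  C = true means party A (M^A), C = false means B (M^B).
   The fuel n is the height of the protocol. *)
Fixpoint dom_aux (C : bool) (n : nat) (P : protocol R) (l : seq bool) : R :=
  match n with
  | 0 => if C then (out P l)%:R else 1 - (out P l)%:R
  | n'.+1 =>
    match l with
    | [::] => 0
    | b :: l' =>
      let mu c := expect_opt (subp P [:: c])
                    (dom_aux C n' (shift P [:: c])) in
      let e := edge P [::] b in
      let Mb := dom_aux C n' (shift P [:: b]) l' in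
      if e == 0 then 0
      else if e == 1 then Mb
      else if (0 < e < 1) && ((ctrlA P [::] == C) || (mu b <= mu (~~ b)))
      then Mb
      else mu (~~ b) / mu b * Mb
    end
  end.

Definition dom (C : bool) (oP : option (protocol R)) : seq bool -> R :=
  match oP with
  | None => fun _ => 0
  | Some P => dom_aux C (height P) P
  end.

Definition cond (oP : option (protocol R)) (M : seq bool -> R)
  : option (protocol R) :=
  match oP with
  | None => None
  | Some P =>
    if expect P M == 1 then None
    else Some (Protocol (height P) (ctrlA P)
      (fun u b =>
         if expU P M u == 1 then 0
         else edge P u b * (1 - expU P M (rcons u b)) / (1 - expU P M u))
      (out P))
  end.

Fixpoint PiA (P : protocol R) (j : nat) : option (protocol R) :=
  match j with
  | 0 => Some P
  | j'.+1 =>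
    let pA := PiA P j' in
    let pB := cond pA (dom true pA) in
    cond pB (dom false pB)
  end.

Definition PiB (P : protocol R) (j : nat) : option (protocol R) :=
  cond (PiA P j) (dom true (PiA P j)).

Definition PiSeq (P : protocol R) (C : bool) (j : nat) : option (protocol R) :=
  if C then PiA P j else PiB P j.

End Protocols.

From mathcomp Require Import all_boot all_order all_algebra.
From mathcomp Require Import reals boolp.
From mathcomp Require Import lra zify ring.
Set Implicit Arguments. Unset Strict Implicit. Unset Printing Implicit Defensive.
Import Order.TTheory GRing.Theory Num.Theory.
Local Open Scope ring_scope.

(* Write M^C for the C-dominated measure.  Conditioning a protocol on its own
   dominated measure kills it: the dominated measure of Pi|_{M^C} has
   expectation 0.  By induction on the height: a child whose measure M^C
   rescales has a sibling that M^C keeps unchanged, the induction hypothesis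
   kills that sibling in Pi|_{M^C}, and then either the rescaling factor of the
   child or its own expectation vanishes.
   On the other hand every protocol has a reachable leaf on which M^A or M^B
   equals 1: follow a child that neither measure rescales.  Once M^B has been
   killed, M^A equals 1 on that leaf, so conditioning on M^A removes it from
   the support, and symmetrically.  If no stage of the sequence had
   expectation 1, the number of reachable leaves would thus drop by at least
   two per round, which is impossible. *)

Section Protocols.
Variable R : realType.
Implicit Types (P Q : protocol R) (M F : seq bool -> R) (u v l : seq bool).

Lemma mem_all_strings n l : (l \in all_strings n) = (size l == n).
Proof.
elim: n l => [|n IH] [|b l] //.
- by apply/allpairsPdep => -[x [y []]].
- rewrite [size _]/= eqSS -IH; apply/allpairsPdep/idP => [[x [y [_ Hy [_ ->]]]] // | Hl].
  by exists b, l; split => //; case: b.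
Qed.

Lemma visit_nil P : visit P [::] = 1.
Proof. by rewrite /visit big_ord0. Qed.

Lemma visit_cat P u v : visit P (u ++ v) = visit P u * visit (shift P u) v.
Proof.
rewrite /visit size_cat big_split_ord /=; congr (_ * _); apply: eq_bigr => i _ /=.
- by rewrite take_cat nth_cat ltn_ord.
- by rewrite take_cat nth_cat ltnNge leq_addr /= addKn.
Qed.

Lemma visit1 P b : visit P [:: b] = edge P [::] b.
Proof. by rewrite /visit big_ord1. Qed.

Lemma visit_cons P b v : visit P (b :: v) = edge P [::] b * visit (shift P [:: b]) v.
Proof. by rewrite -cat1s visit_cat visit1. Qed.

Lemma visit_rcons P u b : visit P (rcons u b) = visit P u * edge P u b.
Proof. by rewrite -cats1 visit_cat visit1 /= cats0. Qed.

Lemma protocol_ext P Q : height P = height Q -> ctrlA P =1 ctrlA Q ->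
  (forall u b, edge P u b = edge Q u b) -> out P =1 out Q -> P = Q.
Proof.
case: P Q => h c e o [h' c' e' o'] /= -> /funext -> He /funext ->.
by congr Protocol; apply/funext => u; apply/funext => b; apply: He.
Qed.

Lemma shift_cat P u v : shift (shift P u) v = shift P (u ++ v).
Proof.
apply: protocol_ext => /=; first by rewrite size_cat subnDA.
all: by move=> *; rewrite catA.
Qed.

Lemma shift_nil P : shift P [::] = P.
Proof. by apply: protocol_ext => //=; rewrite subn0. Qed.

Lemma height_shift1 n P b : height P = n.+1 -> height (shift P [:: b]) = n.
Proof. by move=> HP /=; rewrite HP subn1. Qed.

Lemma expect_height0 P F : height P = 0%N -> expect P F = F [::].
Proof. by move=> HP; rewrite /expect HP big_seq1 visit_nil mul1r. Qed.

Lemma expect_heightS n P F : height P = n.+1 ->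
  expect P F = edge P [::] false * expect (shift P [:: false]) (fun l => F (false :: l))
             + edge P [::] true * expect (shift P [:: true]) (fun l => F (true :: l)).
Proof.
move=> HP; rewrite /expect /= HP subn1 /= cats0 big_cat !big_map.
by congr (_ + _); rewrite big_distrr; apply: eq_bigr => l _; rewrite visit_cons /= mulrA.
Qed.

Lemma eq_expect P F G : F =1 G -> expect P F = expect P G.
Proof. by move=> FG; apply: eq_bigr => l _; rewrite FG. Qed.

Lemma expectMl P k F : expect P (fun l => k * F l) = k * expect P F.
Proof. by rewrite /expect big_distrr; apply: eq_bigr => l _; rewrite mulrCA. Qed.

(* Conditioning sets both edges of a node u to 0 when E_{Pi_u}[M] = 1, so
   Pi|_M is in general only a distribution at the nodes it reaches. *)
Definition reach_valid P := forall u, (size u < height P)%N -> visit P u != 0 ->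
  (forall b, 0 <= edge P u b <= 1) /\ edge P u false + edge P u true = 1.

Lemma valid_reach_valid P : valid P -> reach_valid P.
Proof. by move=> HV u Hu _; apply: HV. Qed.

Lemma reach_valid_root n P : height P = n.+1 -> reach_valid P ->
  (forall b, 0 <= edge P [::] b <= 1) /\ edge P [::] false + edge P [::] true = 1.
Proof. by move=> HP HW; apply: HW; rewrite ?HP // visit_nil oner_neq0. Qed.

Lemma reach_valid_shift P u : reach_valid P -> visit P u != 0 -> reach_valid (shift P u).
Proof.
move=> HW Hu v Hv Hvis; have := HW (u ++ v).
rewrite size_cat visit_cat; apply; last by rewrite mulf_neq0.
by move: Hv => /=; lia.
Qed.

Lemma reach_valid_child P b : reach_valid P -> edge P [::] b != 0 ->
  reach_valid (shift P [:: b]).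
Proof. by move=> HW Hb; apply: reach_valid_shift => //; rewrite visit1. Qed.

Lemma edge_neg n P b : height P = n.+1 -> reach_valid P ->
  edge P [::] (~~ b) = 1 - edge P [::] b.
Proof. by move=> HP HW; have [_] := reach_valid_root HP HW; case: b => /= <-; ring. Qed.

Lemma edge_gt0_lt1 n P b : height P = n.+1 -> reach_valid P ->
  edge P [::] b != 0 -> edge P [::] b != 1 -> 0 < edge P [::] b < 1.
Proof.
move=> HP HW H0 H1; have [/(_ b) /andP [e0 e1] _] := reach_valid_root HP HW.
by rewrite !lt_def H0 e0 eq_sym H1 e1.
Qed.

Lemma expect_in01 n P F : height P = n -> reach_valid P ->
  (forall l, 0 <= F l <= 1) -> 0 <= expect P F <= 1.
Proof.
elim: n P F => [|n IH] P F HP HW HF; first by rewrite expect_height0.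
rewrite (expect_heightS _ HP); have [He Hs] := reach_valid_root HP HW.
have Hb b : 0 <= edge P [::] b * expect (shift P [:: b]) (fun l => F (b :: l))
              <= edge P [::] b.
  have [-> | Hb] := eqVneq (edge P [::] b) 0; first by rewrite mul0r lexx.
  have /andP [h0 h1] := IH _ (fun l => F (b :: l)) (height_shift1 b HP)
                          (reach_valid_child HW Hb) (fun l => HF _).
  have /andP [e0 e1] := He b.
  by rewrite mulr_ge0 //= ler_piMr.
have /andP [a0 a1] := Hb false; have /andP [b0 b1] := Hb true.
apply/andP; split; lra.
Qed.

Definition mu C n P c := expect_opt (subp P [:: c]) (dom_aux C n (shift P [:: c])).

Lemma muE C n P c : mu C n P c =
  if edge P [::] c == 0 then 0 else expect (shift P [:: c]) (dom_aux C n (shift P [:: c])).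
Proof. by rewrite /mu /subp visit1; case: ifP. Qed.

Definition unscaled C n P b :=
  [|| edge P [::] b == 1, ctrlA P [::] == C | mu C n P b <= mu C n P (~~ b)].

Definition dom_factor C n P b :=
  if unscaled C n P b then 1 else mu C n P (~~ b) / mu C n P b.

Lemma dom_aux_cons C n P b l : height P = n.+1 -> reach_valid P -> edge P [::] b != 0 ->
  dom_aux C n.+1 P (b :: l) = dom_factor C n P b * dom_aux C n (shift P [:: b]) l.
Proof.
move=> HP HW Hb; rewrite /= (negbTE Hb) /dom_factor /unscaled.
case: ifPn => [_ | Hb1]; first by rewrite mul1r.
by rewrite (edge_gt0_lt1 HP HW Hb Hb1) /=; case: ifP; rewrite ?mul1r.
Qed.

Lemma dom_aux_cons_unscaled C n P b l : height P = n.+1 -> reach_valid P ->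
  edge P [::] b != 0 -> unscaled C n P b ->
  dom_aux C n.+1 P (b :: l) = dom_aux C n (shift P [:: b]) l.
Proof. by move=> HP HW Hb Hu; rewrite dom_aux_cons // /dom_factor Hu mul1r. Qed.

Lemma dom_factor_in01 C n P b : 0 <= mu C n P (~~ b) -> 0 <= dom_factor C n P b <= 1.
Proof.
move=> Hmu; rewrite /dom_factor /unscaled; case: ifPn => [_|]; first by rewrite ler01 lexx.
rewrite !negb_or -ltNge => /and3P [_ _ Hlt].
have Hpos : 0 < mu C n P b by apply: le_lt_trans Hlt.
by rewrite divr_ge0 ?(ltW Hpos) //= ler_pdivrMr // mul1r ltW.
Qed.

Lemma dom_aux_in01 C n P : height P = n -> reach_valid P ->
  forall l, 0 <= dom_aux C n P l <= 1.
Proof.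
elim: n P => [|n IH] P HP HW l.
  by case: C => /=; case: (out P l); rewrite ?subr0 ?subrr ?lexx ?ler01.
case: l => [|b l]; first by rewrite /= lexx ler01.
have [He0 | Hb] := eqVneq (edge P [::] b) 0; first by rewrite /= He0 eqxx lexx ler01.
have Hch c : edge P [::] c != 0 -> forall l, 0 <= dom_aux C n (shift P [:: c]) l <= 1.
  by move=> Hc; apply: IH; [apply: height_shift1 | apply: reach_valid_child].
have Hmu : 0 <= mu C n P (~~ b).
  rewrite muE; case: ifPn => [_ | Hnb]; first exact: lexx.
  by have /andP [] := expect_in01 (height_shift1 _ HP) (reach_valid_child HW Hnb) (Hch _ Hnb).
have /andP [f0 f1] := dom_factor_in01 Hmu.
have /andP [d0 d1] := Hch b Hb l.
by rewrite dom_aux_cons // mulr_ge0 //= mulr_ile1.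
Qed.

Lemma mu_in01 C n P c : height P = n.+1 -> reach_valid P -> 0 <= mu C n P c <= 1.
Proof.
move=> HP HW; rewrite muE; case: ifPn => [_ | Hc]; first by rewrite lexx ler01.
have HPc := height_shift1 c HP; have HWc := reach_valid_child HW Hc.
exact: expect_in01 HPc HWc (dom_aux_in01 C HPc HWc).
Qed.

Lemma exists_child_unscaled n P : height P = n.+1 -> reach_valid P ->
  exists2 c, edge P [::] c != 0 & forall C, unscaled C n P c.
Proof.
move=> HP HW; set D := ~~ ctrlA P [::].
have [c Hc] : exists c, mu D n P c <= mu D n P (~~ c).
  case: (lerP (mu D n P false) (mu D n P true)) => H; first by exists false.
  by exists true; apply: ltW.
have [Hc0 | Hc0] := eqVneq (edge P [::] c) 0.
  have Hnc1 : edge P [::] (~~ c) = 1 by rewrite (edge_neg _ HP HW) Hc0 subr0.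
  by exists (~~ c) => [|C]; rewrite /unscaled Hnc1 ?oner_neq0 ?eqxx.
exists c => // C; rewrite /unscaled; move: Hc; rewrite /D.
by case: C; case: (ctrlA P [::]) => /= Hc; rewrite ?Hc orbT.
Qed.

Lemma exists_leaf_dom1 n P : height P = n -> reach_valid P -> exists l,
  [/\ size l = n, visit P l != 0 & dom_aux true n P l = 1 \/ dom_aux false n P l = 1].
Proof.
elim: n P => [|n IH] P HP HW.
  exists [::]; rewrite visit_nil oner_neq0; split => //=.
  by case: (out P [::]); [left | right]; rewrite /= ?subr0.
have [c Hc Hu] := exists_child_unscaled HP HW.
have [l [Hl Hv Hd]] := IH _ (height_shift1 c HP) (reach_valid_child HW Hc).
exists (c :: l); rewrite visit_cons mulf_neq0 // !(dom_aux_cons_unscaled _ HP HW Hc) //.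
by split; rewrite /= ?Hl.
Qed.

(* [cond (Some P) M] reduces to [Some (condP P M)] when [expect P M != 1]. *)
Definition condP P M := Protocol (height P) (ctrlA P)
  (fun u b => if expU P M u == 1 then 0
              else edge P u b * (1 - expU P M (rcons u b)) / (1 - expU P M u))
  (out P).

Lemma expU_nil P M : expU P M [::] = expect P M.
Proof. by rewrite /expU /subp visit_nil oner_eq0 /= shift_nil. Qed.

Lemma expU1 P M b : expU P M [:: b] =
  if edge P [::] b == 0 then 0 else expect (shift P [:: b]) (fun l => M (b :: l)).
Proof. by rewrite /expU /subp visit1; case: ifP. Qed.

Lemma expU_cons P M b v : edge P [::] b != 0 ->
  expU P M (b :: v) = expU (shift P [:: b]) (fun l => M (b :: l)) v.
Proof.
move=> Hb; rewrite /expU /subp visit_cons mulf_eq0 (negbTE Hb) /=.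
by case: ifP => // _; rewrite shift_cat.
Qed.

Lemma expU_leaf P M l : size l = height P -> visit P l != 0 -> expU P M l = M l.
Proof.
move=> Hl Hv; rewrite /expU /subp (negbTE Hv) /= expect_height0 ?cats0 //=.
by rewrite Hl subnn.
Qed.

Lemma expU_in01 P M u : reach_valid P -> (forall l, 0 <= M l <= 1) ->
  0 <= expU P M u <= 1.
Proof.
move=> HW HM; rewrite /expU /subp; case: ifPn => Hv /=; first by rewrite lexx ler01.
exact: (expect_in01 (erefl _) (reach_valid_shift HW Hv) (fun l => HM _)).
Qed.

Lemma expU_rcons P M u : reach_valid P -> (size u < height P)%N -> visit P u != 0 ->
  expU P M u = edge P u false * expU P M (rcons u false)
             + edge P u true * expU P M (rcons u true).
Proof.
move=> HW Hu Hv.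
have HS : height (shift P u) = (height P - size u - 1).+1 by rewrite /=; lia.
have Hc c : edge (shift P u) [::] c *
    expect (shift (shift P u) [:: c]) (fun l => M (u ++ c :: l)) =
    edge P u c * expU P M (rcons u c).
  rewrite /= cats0 shift_cat cats1 /expU /subp visit_rcons mulf_eq0 (negbTE Hv) /=.
  case: ifPn => [/eqP -> | Hc]; rewrite ?mul0r //=.
  by congr (_ * _); apply: eq_expect => l; rewrite cat_rcons.
by rewrite {1}/expU /subp (negbTE Hv) /= (expect_heightS _ HS) -!Hc.
Qed.

Lemma one_subr_expU P M u : reach_valid P -> (size u < height P)%N -> visit P u != 0 ->
  1 - expU P M u = edge P u false * (1 - expU P M (rcons u false))
                 + edge P u true * (1 - expU P M (rcons u true)).
Proof.
move=> HW Hu Hv; have [_ Hs] := HW u Hu Hv.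
by rewrite (expU_rcons M HW Hu Hv) -{1}Hs; ring.
Qed.

Lemma cond_weight_ge0 P M u c : reach_valid P -> (forall l, 0 <= M l <= 1) ->
  (size u < height P)%N -> visit P u != 0 ->
  0 <= edge P u c * (1 - expU P M (rcons u c)).
Proof.
move=> HW HM Hu Hv; have [/(_ c) /andP [e0 _] _] := HW u Hu Hv.
have /andP [_ y1] := expU_in01 (rcons u c) HW HM.
by rewrite mulr_ge0 // subr_ge0.
Qed.

Lemma condP_edge_distr P M u : reach_valid P -> (forall l, 0 <= M l <= 1) ->
  (size u < height P)%N -> visit P u != 0 -> expU P M u != 1 ->
  (forall b, 0 <= edge (condP P M) u b <= 1) /\
  edge (condP P M) u false + edge (condP P M) u true = 1.
Proof.
move=> HW HM Hu Hv Hx1; rewrite /= (negbTE Hx1).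
have Hw c := cond_weight_ge0 c HW HM Hu Hv.
have Hd := one_subr_expU M HW Hu Hv.
have Hpos : 0 < 1 - expU P M u.
  by have /andP [_ x1] := expU_in01 u HW HM; rewrite subr_gt0 lt_def eq_sym Hx1 x1.
split; last by rewrite -mulrDl -Hd divff // gt_eqF.
move=> c; rewrite divr_ge0 ?Hw ?(ltW Hpos) //= ler_pdivrMr // mul1r Hd.
by have := Hw false; have := Hw true; case: c => ? ?; lra.
Qed.

Lemma visit_condP P M u : reach_valid P -> (forall l, 0 <= M l <= 1) ->
  expect P M != 1 -> (size u <= height P)%N ->
  visit (condP P M) u * (1 - expect P M) = visit P u * (1 - expU P M u).
Proof.
move=> HW HM HE; elim/last_ind: u => [|u b IHu] Hu; first by rewrite !visit_nil expU_nil.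
rewrite size_rcons in Hu; rewrite !visit_rcons mulrAC (IHu (ltnW Hu)).
have [-> | Hv] := eqVneq (visit P u) 0; first by rewrite !mul0r.
rewrite /=; case: ifPn => [/eqP Hx1 | Hx1]; last by field; rewrite subr_eq0 eq_sym.
have /eqP : edge P u false * (1 - expU P M (rcons u false))
          + edge P u true * (1 - expU P M (rcons u true)) = 0.
  by rewrite -one_subr_expU // Hx1 subrr.
rewrite paddr_eq0 ?cond_weight_ge0 // => /andP [/eqP h0 /eqP h1].
by rewrite mulr0 -mulrA; case: b; rewrite ?h0 ?h1 mulr0.
Qed.

Lemma visit_condP_neq0 P M u : reach_valid P -> (forall l, 0 <= M l <= 1) ->
  expect P M != 1 -> (size u <= height P)%N -> visit (condP P M) u != 0 ->
  visit P u != 0 /\ expU P M u != 1.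
Proof.
move=> HW HM HE Hu HvQ.
have : visit P u * (1 - expU P M u) != 0.
  by rewrite -visit_condP // mulf_neq0 // subr_eq0 eq_sym.
by rewrite mulf_eq0 negb_or subr_eq0 [1 == _]eq_sym => /andP.
Qed.

Lemma reach_valid_condP P M : reach_valid P -> (forall l, 0 <= M l <= 1) ->
  expect P M != 1 -> reach_valid (condP P M).
Proof.
move=> HW HM HE u Hu HvQ.
have [Hv Hx1] := visit_condP_neq0 HW HM HE (ltnW Hu) HvQ.
exact: condP_edge_distr.
Qed.

Lemma condP_leaf P M l : reach_valid P -> (forall l, 0 <= M l <= 1) ->
  expect P M != 1 -> size l = height P -> visit (condP P M) l != 0 ->
  visit P l != 0 /\ M l != 1.
Proof.
move=> HW HM HE Hl HvQ; have [Hv] := visit_condP_neq0 HW HM HE (eq_leq Hl) HvQ.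
by rewrite expU_leaf.
Qed.

Lemma edge_condP_root P M c : expect P M != 1 ->
  edge (condP P M) [::] c = edge P [::] c * (1 - expU P M [:: c]) / (1 - expect P M).
Proof. by move=> HE; rewrite /= expU_nil (negbTE HE). Qed.

Lemma edge_condP_root_neq0 P M c : expect P M != 1 -> edge (condP P M) [::] c != 0 ->
  edge P [::] c != 0 /\ expU P M [:: c] != 1.
Proof.
move=> HE; rewrite edge_condP_root // !mulf_eq0 !negb_or subr_eq0 [1 == _]eq_sym.
by case/andP => /andP [].
Qed.

Lemma shift_condP P M b : edge P [::] b != 0 ->
  shift (condP P M) [:: b] = condP (shift P [:: b]) (fun l => M (b :: l)).
Proof. by move=> Hb; apply: protocol_ext => // u c; rewrite /= !expU_cons. Qed.

Lemma expU1_unscaled C n P c : height P = n.+1 -> reach_valid P -> unscaled C n P c ->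
  expU P (dom_aux C n.+1 P) [:: c] = mu C n P c.
Proof.
move=> HP HW Hu; rewrite expU1 muE; case: ifPn => // Hc.
by apply: eq_expect => l; rewrite dom_aux_cons_unscaled.
Qed.

Lemma unscaled_neg C n P b : ~~ unscaled C n P b -> unscaled C n P (~~ b).
Proof.
by rewrite /unscaled !negb_or -ltNge negbK => /and3P [_ _ /ltW ->]; rewrite !orbT.
Qed.

Lemma expect_dom_aux_heightS C n P : height P = n.+1 -> reach_valid P ->
  expect P (dom_aux C n.+1 P) =
    edge P [::] false * (dom_factor C n P false * mu C n P false)
  + edge P [::] true * (dom_factor C n P true * mu C n P true).
Proof.
move=> HP HW; rewrite (expect_heightS _ HP).
have Hb b : edge P [::] b * expect (shift P [:: b]) (fun l => dom_aux C n.+1 P (b :: l))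
          = edge P [::] b * (dom_factor C n P b * mu C n P b).
  have [-> | Hb] := eqVneq (edge P [::] b) 0; first by rewrite !mul0r.
  by rewrite (eq_expect _ (fun l => dom_aux_cons C l HP HW Hb)) expectMl muE (negbTE Hb).
by rewrite !Hb.
Qed.

Section ConditioningKillsDom.
Variables (C : bool) (n : nat).
Hypothesis cond_kills : forall P, height P = n -> reach_valid P ->
  expect P (dom_aux C n P) != 1 ->
  expect (condP P (dom_aux C n P)) (dom_aux C n (condP P (dom_aux C n P))) = 0.
Variable P : protocol R.
Hypotheses (HP : height P = n.+1) (HW : reach_valid P)
  (HE : expect P (dom_aux C n.+1 P) != 1).
Local Notation M := (dom_aux C n.+1 P).
Local Notation Q := (condP P M).

Let HQ : height Q = n.+1 := HP.
Let HWQ : reach_valid Q := reach_valid_condP HW (dom_aux_in01 C HP HW) HE.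

Lemma mu_condP_unscaled c : unscaled C n P c -> mu C n Q c = 0.
Proof.
move=> Hu; rewrite muE; case: ifPn => // HQc.
have [Hc Hy1] := edge_condP_root_neq0 HE HQc.
have HMc : (fun l => M (c :: l)) = dom_aux C n (shift P [:: c]).
  by apply/funext => l; rewrite dom_aux_cons_unscaled.
rewrite shift_condP // HMc.
apply: cond_kills; [exact: height_shift1 HP | exact: reach_valid_child HW Hc |].
by move: Hy1; rewrite expU1_unscaled // muE (negbTE Hc).
Qed.

Lemma condP_edge_neq1 b : ~~ unscaled C n P b -> edge Q [::] b != 1.
Proof.
move=> Hs; have Hnb := unscaled_neg Hs.
move: Hs; rewrite /unscaled !negb_or -ltNge => /and3P [He1 _ Hlt].
have Hnb0 : edge P [::] (~~ b) != 0 by rewrite (edge_neg _ HP HW) subr_eq0 eq_sym.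
have Hmunb : mu C n P (~~ b) != 1.
  by have /andP [_ Hmub] := mu_in01 C b HP HW; rewrite lt_eqF // (lt_le_trans Hlt).
(* [edge Q [::] (~~ b) = 0] would force [mu C n P (~~ b) = 1], whereas
   [mu C n P (~~ b) < mu C n P b <= 1]. *)
apply/eqP => HQ1; have /eqP := edge_neg b HQ HWQ; rewrite HQ1 subrr.
rewrite edge_condP_root // expU1_unscaled // !mulf_eq0 (negbTE Hnb0) subr_eq0.
by rewrite [1 == _]eq_sym (negbTE Hmunb) invr_eq0 subr_eq0 [1 == _]eq_sym (negbTE HE).
Qed.

Lemma dom_factor_mu_condP b : dom_factor C n Q b * mu C n Q b = 0.
Proof.
have [Hu | Hs] := boolP (unscaled C n P b); first by rewrite mu_condP_unscaled // mulr0.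
have HQnb := mu_condP_unscaled (unscaled_neg Hs).
rewrite /dom_factor; case: ifPn => [HuQ | _]; last by rewrite HQnb !mul0r.
move: HuQ; rewrite /unscaled (negbTE (condP_edge_neq1 Hs)) HQnb /= => /orP [Hctrl | Hle].
  by move: Hs; rewrite /unscaled Hctrl orbT.
have /andP [mu0 _] := mu_in01 C b HQ HWQ.
by apply/eqP; rewrite mul1r eq_le Hle mu0.
Qed.

Lemma expect_dom_condP : expect Q (dom_aux C n.+1 Q) = 0.
Proof.
by rewrite (expect_dom_aux_heightS C HQ HWQ) !dom_factor_mu_condP !mulr0 addr0.
Qed.

End ConditioningKillsDom.

Lemma expect_dom_condP_dom C n P : height P = n -> reach_valid P ->
  expect P (dom_aux C n P) != 1 ->
  expect (condP P (dom_aux C n P)) (dom_aux C n (condP P (dom_aux C n P))) = 0.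
Proof.
elim: n P => [|n IH] P HP HW HE; last exact: expect_dom_condP.
move: HE; rewrite !expect_height0 //=.
by case: C; case: (out P [::]); rewrite /= ?subr0 ?subrr ?eqxx.
Qed.

Definition supp P := count (fun l => visit P l != 0) (all_strings (height P)).

Lemma visit_ge0 P u : reach_valid P -> (size u <= height P)%N -> 0 <= visit P u.
Proof.
move=> HW; elim/last_ind: u => [|u b IH] Hu; first by rewrite visit_nil ler01.
rewrite size_rcons in Hu; rewrite visit_rcons.
have [-> | Hv] := eqVneq (visit P u) 0; first by rewrite mul0r.
have [/(_ b) /andP [e0 _] _] := HW u Hu Hv.
by rewrite mulr_ge0 // IH // ltnW.
Qed.

Lemma expect_eq0_leaf P F l : reach_valid P -> (forall l, 0 <= F l) -> expect P F = 0 ->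
  size l = height P -> visit P l != 0 -> F l = 0.
Proof.
move=> HW HF /eqP; rewrite /expect big_seq psumr_eq0 => [/allP HE Hl Hv|].
  have := HE l; rewrite mem_all_strings Hl eqxx implyTb mulf_eq0 (negbTE Hv).
  by move=> /(_ isT) /eqP.
move=> i; rewrite mem_all_strings => /eqP Hi.
by rewrite mulr_ge0 // visit_ge0 // Hi.
Qed.

Lemma supp_gt0 P : reach_valid P -> (0 < supp P)%N.
Proof.
move=> HW; rewrite -has_count; apply/hasP.
have [l [Hl Hv _]] := exists_leaf_dom1 (erefl _) HW.
by exists l; rewrite ?mem_all_strings ?Hl.
Qed.

Lemma sub_in_count (T : eqType) (a b : pred T) s :
  {in s, subpred a b} -> (count a s <= count b s)%N.
Proof.
move=> sab; rewrite (@eq_in_count _ a (predI b a)) ?sub_count // => [x /andP [] //|x /sab].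
by rewrite /=; case: (a x) => [/(_ isT) ->|]; rewrite ?andbF.
Qed.

Lemma sub_in_count_lt (T : eqType) (a b : pred T) s x :
  {in s, subpred a b} -> x \in s -> b x -> ~~ a x -> (count a s < count b s)%N.
Proof.
move=> sab xs bx nax; rewrite -[count b s]size_filter -(count_predC a) !count_filter.
rewrite (@eq_in_count _ (predI a b) a); last first.
  by move=> y /sab /=; case: (a y) => // /(_ isT).
rewrite -[X in (X < _)%N]addn0 ltn_add2l -has_count.
by apply/hasP; exists x => //=; rewrite nax bx.
Qed.

Lemma condP_dom_step C P : reach_valid P -> expect P (dom_aux C (height P) P) != 1 ->
  let Q := condP P (dom_aux C (height P) P) in
  [/\ reach_valid Q, expect Q (dom_aux C (height Q) Q) = 0 & (supp Q <= supp P)%N].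
Proof.
move=> HW HE Q; have HM := dom_aux_in01 C (erefl _) HW.
split; [exact: reach_valid_condP | exact: expect_dom_condP_dom |].
apply: sub_in_count => l; rewrite mem_all_strings => /eqP Hl HvQ.
by have [] := condP_leaf HW HM HE Hl HvQ.
Qed.

Lemma supp_condP_dom_lt C P : reach_valid P -> expect P (dom_aux (~~ C) (height P) P) = 0 ->
  expect P (dom_aux C (height P) P) != 1 ->
  (supp (condP P (dom_aux C (height P) P)) < supp P)%N.
Proof.
move=> HW H0 HE; have HM := dom_aux_in01 C (erefl _) HW.
have [l [Hl Hv Hd]] := exists_leaf_dom1 (erefl _) HW.
have Hnl : dom_aux (~~ C) (height P) P l = 0.
  apply: expect_eq0_leaf H0 Hl Hv => //.
  by move=> l'; have /andP [] := dom_aux_in01 (~~ C) (erefl _) HW l'.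
have H1 : dom_aux C (height P) P l = 1.
  by move: Hnl Hd; case: (C) => /= -> [] // /eqP; rewrite eq_sym oner_eq0.
apply: (sub_in_count_lt (x := l)); rewrite ?mem_all_strings ?Hl ?Hv //.
- by move=> l' /[!mem_all_strings] /eqP Hl' /(condP_leaf HW HM HE Hl') [].
- by apply/negP => /(condP_leaf HW HM HE Hl) []; rewrite H1 eqxx.
Qed.

Lemma PiA_S P j : PiA P j.+1 = cond (PiB P j) (dom false (PiB P j)).
Proof. by []. Qed.

Lemma PiB_supp_shrinks P j : reach_valid P ->
  (forall C i, (i <= j)%N -> expect_opt (PiSeq P C i) (dom C (PiSeq P C i)) != 1) ->
  exists2 B, PiB P j = Some B & [/\ reach_valid B,
    expect B (dom_aux true (height B) B) = 0 & (supp B + 2 * j <= supp P)%N].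
Proof.
move=> HW; elim: j => [|j IH] Hnot1.
  have HE : expect P (dom_aux true (height P) P) != 1 := Hnot1 true 0%N (leqnn 0).
  have [WB EB SB] := condP_dom_step HW HE.
  by exists (condP P (dom_aux true (height P) P)); [rewrite /PiB /= (negbTE HE) | rewrite addn0].
have [B HB [WB EB SB]] := IH (fun C i Hi => Hnot1 C i (leqW Hi)).
have HEB : expect B (dom_aux false (height B) B) != 1.
  by have := Hnot1 false j (leqnSn j); rewrite /PiSeq HB.
set A := condP B (dom_aux false (height B) B).
have HA : PiA P j.+1 = Some A by rewrite PiA_S HB /= (negbTE HEB).
have HEA : expect A (dom_aux true (height A) A) != 1.
  by have := Hnot1 true j.+1 (leqnn _); rewrite /PiSeq HA.
have [WA EA _] := condP_dom_step WB HEB.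
have [WB' EB' _] := condP_dom_step WA HEA.
have LA := @supp_condP_dom_lt false B WB EB HEB.
have LB := @supp_condP_dom_lt true A WA EA HEA.
exists (condP A (dom_aux true (height A) A)); first by rewrite /PiB HA /= (negbTE HEA).
by split => //; move: LA LB SB; rewrite -/A; lia.
Qed.

End Protocols.

Theorem lemma3p44 (R : realType) (P : protocol R) :
  valid P ->
  exists (C : bool) (j : nat),
    expect_opt (PiSeq P C j) (dom C (PiSeq P C j)) = 1.
Proof.
move=> HV; apply: contrapT => Hnone.
have Hnot1 C i : (i <= supp P)%N -> expect_opt (PiSeq P C i) (dom C (PiSeq P C i)) != 1.
  by move=> _; apply/eqP => Hi; apply: Hnone; exists C, i.
have [B _ [WB _ Hsupp]] := PiB_supp_shrinks (valid_reach_valid HV) Hnot1.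
by have := supp_gt0 WB; lia.
Qed.
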